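(* Let $k>1$ be an odd integer and let $n_k=\lceil \log_2 k\rceil$. Then for every integer $x\in\{0,1,\ldots,k-1\}$ there exist $n_k$ pairwise distinct integers $i_1,\ldots,i_{n_k}\in\{0,1,\ldots,n_k+k-2\}$ such that $$x\equiv 2^{i_1}+2^{i_2}+\cdots+2^{i_{n_k}}\pmod k.$$ In other words, $x$ is congruent modulo $k$ to a sum of exactly $n_k$ distinct elements of $D=\{2^i: i=0,1,\ldots,n_k+k-2\}$.
   Context: $n_k=\lceil\log_2 k\rceil$ is the smallest integer $n$ with $k\le 2^{n}$. *)

From mathcomp Require Import all_boot.
(* n_k = ceil(log2 k) = smallest n with k <= 2^n, i.e. mathcomp's up_log 2 k *)
Definition nk (k : nat) : nat := up_log 2 k.

From mathcomp Require Import all_boot cyclic zify.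

(* Let n = n_k, so that 2^(n-1) < k < 2^n (k is odd), and let
   m = phi(k).  By Euler's theorem 2^m = 1 (mod k), and n <= m <= k - 1.
   For u, v < 2^n, the binary supports of the complement 2^n - 1 - v (in the
   positions 0..n-1) and of u shifted up by m (in the positions m..m+n-1) are
   disjoint, contain n - popcount v + popcount u exponents, all at most
   n + k - 2, and the corresponding powers of 2 add up to
   (2^n - 1 - v) + 2^m u = (2^n - 1 - v) + u (mod k).
   It therefore suffices to write a representative y of x in the window
   [2^(n-1), 2^(n-1) + k) as y = (2^n - 1 - v) + u with popcount u =
   popcount v; this is done with {u, v} = {d, 2d} for a suitable d < 2^(n-1).
   The file first develops binary supports, then the two-block
   representation, then the arithmetic facts about k, and finally combines
   them. *)

Fixpoint bits (n w : nat) : seq nat :=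
  if n is n'.+1 then
    let high := map S (bits n' w./2) in if odd w then 0 :: high else high
  else [::].

Lemma half_ltn_exp2 {n w} : w < 2 ^ n.+1 -> w./2 < 2 ^ n.
Proof. by rewrite ltn_half_double -mul2n -expnS. Qed.

Lemma sum_exp2_mapS (s : seq nat) :
  \sum_(i <- map S s) 2 ^ i = (\sum_(i <- s) 2 ^ i).*2.
Proof.
elim: s => [|a s IH]; first by rewrite !big_nil.
by rewrite /= !big_cons IH expnS doubleD mul2n.
Qed.

Lemma sum_exp2_bits n w : w < 2 ^ n -> \sum_(i <- bits n w) 2 ^ i = w.
Proof.
elim: n w => [|n IH] w /=.
  by rewrite expn0 ltnS leqn0 => /eqP ->; rewrite big_nil.
move=> /half_ltn_exp2 hw; rewrite -[in RHS](odd_double_half w).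
by case: (odd w); rewrite ?big_cons sum_exp2_mapS IH.
Qed.

Lemma bits_ltn n w : all (fun i => i < n) (bits n w).
Proof.
elim: n w => [|n IH] w //=.
have high : all (fun i => i < n.+1) (map S (bits n w./2)) by rewrite all_map.
by case: (odd w); rewrite /= ?high.
Qed.

Lemma uniq_bits n w : uniq (bits n w).
Proof.
elim: n w => [|n IH] w //=.
have high : uniq (map S (bits n w./2)) by rewrite map_inj_uniq // => a b [].
by case: (odd w); rewrite /= high ?andbT //; apply/mapP => -[].
Qed.

Lemma size_bitsS n w : w < 2 ^ n -> size (bits n.+1 w) = size (bits n w).
Proof.
elim: n w => [|n IH] w; first by rewrite expn0 ltnS leqn0 => /eqP ->.
move=> /half_ltn_exp2 hw; rewrite [bits n.+2 w]/= [bits n.+1 w]/=.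
by case: (odd w); rewrite /= !size_map IH.
Qed.

Lemma size_bits_double n d :
  d < 2 ^ n -> size (bits n.+1 d.*2) = size (bits n.+1 d).
Proof.
move=> hd; rewrite [RHS]size_bitsS //=.
by rewrite odd_double doubleK size_map.
Qed.

(* The n-digit complement 2^n - 1 - w flips every digit of w, so the two
   popcounts add up to n. *)
Lemma size_bits_compl n w :
  w < 2 ^ n -> size (bits n (2 ^ n - 1 - w)) + size (bits n w) = n.
Proof.
elim: n w => [|n IH] w hw //=.
have hw2 := half_ltn_exp2 hw.
have digits : 2 ^ n.+1 - 1 - w = ~~ odd w + (2 ^ n - 1 - w./2).*2.
  rewrite -[w in LHS](odd_double_half w) expnS.
  by case: (odd w) hw2 => /=; lia.
rewrite digits oddD odd_double addbF half_bit_double.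
by case: (odd w); rewrite /= !size_map ?addSn ?addnS IH.
Qed.

Lemma two_block_representation n m u v :
  v < 2 ^ n -> u < 2 ^ n -> size (bits n u) = size (bits n v) -> n <= m ->
  let s := bits n (2 ^ n - 1 - v) ++ map (addn m) (bits n u) in
  [/\ size s = n, uniq s, all (fun i => i < n + m) s
    & \sum_(i <- s) 2 ^ i = (2 ^ n - 1 - v) + 2 ^ m * u].
Proof.
move=> hv hu hsize hnm s; split.
- by rewrite size_cat size_map hsize size_bits_compl.
- rewrite cat_uniq !uniq_bits map_inj_uniq ?uniq_bits; last exact: addnI.
  rewrite andbT /=; apply/hasPn => _ /mapP [j _ ->]; apply/negP.
  move=> /(allP (bits_ltn _ _)) /=; lia.
- rewrite all_cat all_map; apply/andP.
  by split; apply: sub_all (bits_ltn _ _) => i /=; lia.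
- have hcompl : 2 ^ n - 1 - v < 2 ^ n by lia.
  rewrite big_cat big_map sum_exp2_bits //; congr (_ + _).
  rewrite -[in RHS](sum_exp2_bits _ _ hu) big_distrr.
  by apply: eq_bigr => j _; rewrite expnD.
Qed.

(* Every y in the window [2^n, 3 * 2^n - 1) is (2^(n+1) - 1 - v) + u with
   u, v < 2^(n+1) of equal popcount: take {u, v} = {d, 2d}. *)
Lemma balanced_pair n y : 2 ^ n <= y -> y <= 2 ^ n.+1 + 2 ^ n - 2 ->
  exists u v, [/\ u < 2 ^ n.+1, v < 2 ^ n.+1,
    size (bits n.+1 u) = size (bits n.+1 v) & 2 ^ n.+1 - 1 - v + u = y].
Proof.
rewrite expnS => hlo hhi.
have [hge | hlt] := leqP (2 * 2 ^ n - 1) y.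
- have hd : y - (2 * 2 ^ n - 1) < 2 ^ n by lia.
  exists (y - (2 * 2 ^ n - 1)).*2, (y - (2 * 2 ^ n - 1)).
  by rewrite size_bits_double //; split; lia.
- have hd : 2 * 2 ^ n - 1 - y < 2 ^ n by lia.
  exists (2 * 2 ^ n - 1 - y), (2 * 2 ^ n - 1 - y).*2.
  by rewrite size_bits_double //; split; lia.
Qed.

Lemma nk_bracket k : 1 < k -> odd k -> exists n, nk k = n.+1 /\ 2 ^ n < k < 2 ^ n.+1.
Proof.
move=> hk hodd; rewrite /nk.
have := up_log_gtn (isT : 1 < 2) hk; have := up_logP k (isT : 1 < 2).
have : 0 < up_log 2 k by rewrite up_log_gt0 hk.
case: (up_log 2 k) => [//|n] _ hup hlo; exists n; split=> //.
rewrite hlo ltn_neqAle hup andbT; apply: contraTneq hodd => ->.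
by rewrite expnS oddM.
Qed.

(* phi(k) counts residues coprime to k, and 0 is not one of them. *)
Lemma totient_le_pred k : 1 < k -> totient k <= k.-1.
Proof.
move=> hk; rewrite totient_count_coprime big_ltn ?(ltnW hk) //.
have -> : coprime k 0 = false by rewrite /coprime gcdn0; case: k hk => [|[|k]].
rewrite add0n -subn1 -[k - 1]muln1 -sum_nat_const_nat.
by apply: leq_sum => i _; apply: leq_b1.
Qed.

Lemma exp2_totient {k} : odd k -> 2 ^ totient k = 1 %[mod k].
Proof. by move=> hodd; apply: Euler_exp_totient; rewrite coprime2n. Qed.

Lemma totient_gt_log2 k n : odd k -> 2 ^ n < k -> n < totient k.
Proof.
move=> hodd hnk; rewrite ltnNge; apply/negP => hle.
have hk : 0 < k by apply: leq_ltn_trans hnk.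
have hpos : 0 < totient k by rewrite totient_gt0.
have hsmall : 2 ^ totient k < k by apply: leq_ltn_trans hnk; rewrite leq_exp2l.
move: (exp2_totient hodd) (hpos).
rewrite modn_small // modn_small; last by apply: leq_ltn_trans hsmall; rewrite expn_gt0.
by rewrite -(expn0 2) => /eqP; rewrite eqn_exp2l // => /eqP ->.
Qed.

Lemma residue_in_window a k x : 0 < k -> exists2 y, a <= y < a + k & y = x %[mod k].
Proof.
move=> hk; exists (a + (x + (k - a %% k)) %% k).
  by rewrite leq_addr ltn_add2l ltn_mod.
have hsplit : a + (x + (k - a %% k)) = (a %/ k).+1 * k + x.
  by have := divn_eq a k; have := ltn_pmod a hk; nia.
by rewrite modnDmr hsplit modnMDl.
Qed.

Theorem mainTheorem1 (k : nat) (hk1 : 1 < k) (hodd : odd k) (x : nat) (hx : x < k) :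
  exists s : seq nat,
    [/\ size s = nk k, uniq s, all (fun i => i <= nk k + k - 2) s
      & x = \sum_(i <- s) 2 ^ i %[mod k]].
Proof.
have [n [-> /andP [hlo hhi]]] := nk_bracket k hk1 hodd.
set m := totient k.
have hnm : n.+1 <= m by apply: totient_gt_log2.
have hmk : m <= k.-1 by apply: totient_le_pred.
have [y /andP [hy_lo hy_hi] hyx] := residue_in_window (2 ^ n) k x (ltnW hk1).
have hy_le : y <= 2 ^ n.+1 + 2 ^ n - 2 by lia.
have [u [v [hu hv hsize hyuv]]] := balanced_pair n y hy_lo hy_le.
have [hs_size hs_uniq hs_lt hs_sum] := two_block_representation _ _ _ _ hv hu hsize hnm.
eexists; split; [exact: hs_size | exact: hs_uniq | |].
  by apply: sub_all hs_lt => i /=; lia.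
by rewrite hs_sum -modnDmr -modnMml (exp2_totient hodd) modnMml mul1n modnDmr hyuv hyx.
Qed.
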